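(* Let $K$ be a positive definite field and $E$ the graph with one vertex and two loops $a,b$. Then $L_K(E)$ is graded $*$-regular but is neither graded unit-regular nor graded directly finite.
   Context: $L_K(E)$ is the unital $K$-algebra generated by $a,b,a^*,b^*$ with identity $v$ (the vertex) subject to $a^*a=b^*b=1$, $a^*b=b^*a=0$, $aa^*+bb^*=1$; it is $\mathbb Z$-graded with $\deg a=\deg b=1$, $\deg a^*=\deg b^*=-1$, and has the involution $(\sum k_ipq^* )^*=\sum k_i^*qp^*$ induced from the involution of $K$. $K$ positive definite: $\sum k_ik_i^*=0\Rightarrow$ all $k_i=0$. A unital graded $*$-ring is graded $*$-regular if for every homogeneous $x$ there is a homogeneous projection $p$ ($p=p^2=p^*$) with $xA=pA$. Graded unit-regular: for every homogeneous $x$ there is an invertible homogeneous $y$ with $xyx=x$. Graded directly finite: for homogeneous $x,y$, $xy=1$ implies $yx=1$. *)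

From HB Require Import structures.
From mathcomp Require Import all_boot all_order all_algebra.
Set Implicit Arguments. Unset Strict Implicit. Unset Printing Implicit Defensive.
Import Order.TTheory GRing.Theory Num.Theory.
Local Open Scope ring_scope.

(* The Leavitt path algebra L_K(E) of the graph E with one vertex v and two
   loops a, b, given concretely by its defining presentation:
   free unital K-algebra on a, b, a*, b* modulo the two-sided ideal generated
   by the relations a*a = 1, b*b = 1, a*b = 0, b*a = 0, aa* + bb* = 1
   (the vertex v is the identity). *)

Inductive letter := La | Lb | Las | Lbs.

Definition letter_eqb (x y : letter) : bool :=
  match x, y with
  | La, La | Lb, Lb | Las, Las | Lbs, Lbs => true
  | _, _ => false end.

Lemma letter_eqP : Equality.axiom letter_eqb.
Proof. by case; case; constructor. Qed.

HB.instance Definition _ := hasDecEq.Build letter letter_eqP.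

Definition word := seq letter.

Definition ldeg (l : letter) : int :=
  match l with La | Lb => 1 | Las | Lbs => -1 end.
Definition wdeg (w : word) : int := \sum_(l <- w) ldeg l.

Definition lstar (l : letter) : letter :=
  match l with La => Las | Lb => Lbs | Las => La | Lbs => Lb end.
Definition wstar (w : word) : word := rev (map lstar w).

Section Free.
Variable K : fieldType.

(* Elements of the free algebra K<a,b,a*,b*> as formal finite K-linear
   combinations of words; [coeff f w] is the coefficient of the word w. *)
Definition free := seq (K * word).

Definition coeff (f : free) (w : word) : K := \sum_(t <- f | t.2 == w) t.1.

Definition fadd (f g : free) : free := f ++ g.
Definition fscale (k : K) (f : free) : free := [seq (k * t.1, t.2) | t <- f].
Definition fneg (f : free) : free := fscale (-1) f.
Definition fmul (f g : free) : free :=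
  [seq (t.1 * s.1, t.2 ++ s.2) | t <- f, s <- g].
Definition fone : free := [:: (1, [::])].
Definition fword (w : word) : free := [:: (1, w)].
Definition fstar (conj : K -> K) (f : free) : free :=
  [seq (conj t.1, wstar t.2) | t <- f].

Definition rel (i : nat) : free :=
  match i with
  | 0 => fadd (fword [:: Las; La]) (fneg fone)
  | 1 => fadd (fword [:: Lbs; Lb]) (fneg fone)
  | 2 => fword [:: Las; Lb]
  | 3 => fword [:: Lbs; La]
  | _ => fadd (fadd (fword [:: La; Las]) (fword [:: Lb; Lbs])) (fneg fone)
  end.

Definition idealgen (s : seq (K * word * nat * word)) : free :=
  flatten [seq fscale t.1.1.1
             (fmul (fword t.1.1.2) (fmul (rel t.1.2) (fword t.2))) | t <- s].

Definition inIdeal (f : free) : Prop :=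
  exists s, forall w, coeff f w = coeff (idealgen s) w.

Definition eqL (f g : free) : Prop := inIdeal (fadd f (fneg g)).

Definition homog (f : free) : Prop :=
  exists (n : int) (g : free), eqL f g /\ all (fun t => wdeg t.2 == n) g.

Definition projL (conj : K -> K) (p : free) : Prop :=
  eqL (fmul p p) p /\ eqL (fstar conj p) p.

Definition invertibleL (y : free) : Prop :=
  exists z, eqL (fmul y z) fone /\ eqL (fmul z y) fone.

Definition graded_star_regular (conj : K -> K) : Prop :=
  forall x, homog x -> exists p, homog p /\ projL conj p /\
    (forall y, exists z, eqL (fmul x y) (fmul p z)) /\
    (forall y, exists z, eqL (fmul p y) (fmul x z)).

Definition graded_unit_regular : Prop :=
  forall x, homog x -> exists y, homog y /\ invertibleL y /\
    eqL (fmul (fmul x y) x) x.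

Definition graded_directly_finite : Prop :=
  forall x y, homog x -> homog y -> eqL (fmul x y) fone -> eqL (fmul y x) fone.

End Free.

Definition positive_definite (K : fieldType) (conj : K -> K) : Prop :=
  forall s : seq K, \sum_(k <- s) k * conj k = 0 -> all (fun k => k == 0) s.

(* Padding monomials p q^* with aa* + bb* = 1, every homogeneous element of
   L_K(E) becomes sum_(i,j) X_ij p_i q_j^* with p_i and q_j ranging over all
   paths of two fixed lengths.  These p_i q_j^* multiply like matrix units and
   * acts on them as the conjugate transpose, so such an element is just a
   rectangular matrix X over K.  As K is positive definite, the Gram matrix of
   a basis of the row space of X^T is invertible, which yields the orthogonal
   projection P onto the column space of X; then P = X Z and X = P X, i.e.
   XA = PA.  On the other hand a*a = 1 while aa* <> 1, as the action of
   L_K(E) on K^N by a : e_n |-> e_2n, b : e_n |-> e_2n+1 shows; so L_K(E) is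
   not graded directly finite, hence not graded unit-regular either. *)

From Pilot Require Import Defs.
From HB Require Import structures.
From mathcomp Require Import all_boot all_order all_algebra.
From mathcomp Require Import zify ring.
From Stdlib Require Import FunctionalExtensionality.
(* Re-import so that [free] is not mathcomp's linear independence predicate. *)
Import Defs.
Set Implicit Arguments. Unset Strict Implicit. Unset Printing Implicit Defensive.
Import Order.TTheory GRing.Theory Num.Theory.
Local Open Scope ring_scope.

Section MatrixProjection.
Variables (K : fieldType) (conj : {rmorphism K -> K}).
Hypothesis conjK : involutive conj.
Hypothesis conj_pd : positive_definite conj.

Definition mxstar m n (A : 'M[K]_(m, n)) : 'M_(n, m) := map_mx conj A^T.

Lemma mxstarM m n p (A : 'M[K]_(m, n)) (B : 'M_(n, p)) :
  mxstar (A *m B) = mxstar B *m mxstar A.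
Proof. by rewrite /mxstar trmx_mul map_mxM. Qed.

Lemma mxstarK m n : cancel (@mxstar m n) (@mxstar n m).
Proof. by move=> A; apply/matrixP=> i j; rewrite !mxE conjK. Qed.

Lemma mxstar_inv n (A : 'M[K]_n) : mxstar (invmx A) = invmx (mxstar A).
Proof. by rewrite /mxstar trmx_inv map_invmx. Qed.

Lemma row_mul_mxstar_eq0 m (w : 'rV[K]_m) : w *m mxstar w = 0 -> w = 0.
Proof.
move=> /matrixP/(_ 0 0); rewrite !mxE => norm0.
have /conj_pd/allP w0 : \sum_(k <- [seq w 0 j | j <- enum 'I_m]) k * conj k = 0.
  by rewrite big_map big_enum -[RHS]norm0; apply: eq_bigr => j _; rewrite !mxE.
by apply/matrixP=> i j; rewrite ord1 mxE; apply/eqP/w0/map_f; rewrite mem_enum.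
Qed.

Lemma gram_unitmx m n (B : 'M[K]_(m, n)) : row_free B -> B *m mxstar B \in unitmx.
Proof.
move=> freeB; rewrite -row_free_unit -kermx_eq0; apply/eqP/row_matrixP => i.
rewrite row0; set v := row i _.
have /sub_kermxP vG0 : (v <= kermx (B *m mxstar B))%MS by apply: row_sub.
have : (v *m B) *m mxstar (v *m B) = 0 by rewrite mxstarM mulmxA -(mulmxA v) vG0 mul0mx.
by move/row_mul_mxstar_eq0/eqP; rewrite mulmx_free_eq0 // => /eqP.
Qed.

(* If the rows of B form a basis of the row space of X^T, then
   Q = B^* G^-1 B with G = B B^* is the orthogonal projection onto that row
   space, so Q^T is the required projection onto the column space of X. *)
Lemma mx_projection_exists m n (X : 'M[K]_(m, n)) :
  exists (P : 'M_m) (Z : 'M_(n, m)),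
    [/\ P *m P = P, mxstar P = P, P = X *m Z & X = P *m X].
Proof.
have eqB := eq_row_base X^T; have freeB := row_base_free X^T.
set B := row_base X^T in eqB freeB *.
set G := B *m mxstar B; have Gu : G \in unitmx by exact: gram_unitmx.
set Q := mxstar B *m invmx G *m B.
have BQ : B *m Q = B by rewrite /Q !mulmxA -/G mulmxV // mul1mx.
have stQ : mxstar Q = Q.
  by rewrite /Q !mxstarM !mxstarK mxstar_inv mxstarM mxstarK mulmxA.
have /submxP[D XD] : (X^T <= B)%MS by rewrite eqB.
have /submxP[W QW] : (Q <= X^T)%MS by rewrite -eqB submxMl.
exists Q^T, W^T; split.
- have QQ : Q *m Q = Q by rewrite {1}/Q -mulmxA BQ.
  by rewrite -trmx_mul QQ.
- by apply/matrixP => i j; move/matrixP: stQ => /(_ j i); rewrite !mxE => ->.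
- by rewrite QW trmx_mul trmxK.
- by apply: trmx_inj; rewrite trmx_mul trmxK XD -mulmxA BQ.
Qed.

End MatrixProjection.

Lemma cat_eqE (T : eqType) (u v w : seq T) :
  (u ++ v == w) = (take (size u) w == u) && (drop (size u) w == v).
Proof.
apply/eqP/andP => [<-|[/eqP tw /eqP dw]]; last by rewrite -tw -dw cat_take_drop.
by rewrite take_size_cat // drop_size_cat.
Qed.

Lemma cat_eqEr (T : eqType) (u v w : seq T) :
  (v ++ u == w) =
  (drop (size w - size u) w == u) && (take (size w - size u) w == v).
Proof.
apply/eqP/andP => [<-|[/eqP dw /eqP tw]]; last by rewrite -[RHS](cat_take_drop (size w - size u)) tw dw.
by rewrite size_cat addnK take_size_cat // drop_size_cat.
Qed.

Section FreeAlgebra.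
Variable K : fieldType.
Implicit Types (f g h : free K) (u v w : word).

Lemma natr_and (a b : bool) : (a && b)%:R = a%:R * b%:R :> K.
Proof. by case: a; case: b; rewrite ?mulr1 ?mulr0. Qed.

Lemma coeffE f w : coeff f w = \sum_(t <- f) t.1 * (t.2 == w)%:R.
Proof.
rewrite /coeff big_mkcond; apply: eq_bigr => t _.
by case: eqP; rewrite ?mulr1 ?mulr0.
Qed.

Lemma coeff_nil w : coeff ([::] : free K) w = 0.
Proof. by rewrite /coeff big_nil. Qed.

Lemma coeff_cons t f w : coeff (t :: f) w = t.1 * (t.2 == w)%:R + coeff f w.
Proof. by rewrite !coeffE big_cons. Qed.

Lemma coeff_cat f g w : coeff (f ++ g) w = coeff f w + coeff g w.
Proof. by rewrite /coeff big_cat. Qed.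

Lemma coeff_scale k f w : coeff (fscale k f) w = k * coeff f w.
Proof. by rewrite /coeff /fscale big_map mulr_sumr. Qed.

Lemma coeff_neg f w : coeff (fneg f) w = - coeff f w.
Proof. by rewrite coeff_scale mulN1r. Qed.

Lemma coeff_flatten (L : seq (free K)) w :
  coeff (flatten L) w = \sum_(l <- L) coeff l w.
Proof. by rewrite /coeff big_flatten. Qed.

Lemma coeff_mul f g w :
  coeff (fmul f g) w =
  \sum_(t <- f) \sum_(s <- g) t.1 * s.1 * (t.2 ++ s.2 == w)%:R.
Proof. by rewrite coeffE /fmul big_allpairs_dep. Qed.

Lemma sum_coeff_prefix g u w :
  \sum_(s <- g) s.1 * (u ++ s.2 == w)%:R =
  (take (size u) w == u)%:R * coeff g (drop (size u) w).
Proof.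
rewrite coeffE mulr_sumr; apply: eq_bigr => s _.
by rewrite cat_eqE natr_and mulrCA (eq_sym (drop _ _)).
Qed.

Lemma sum_coeff_suffix g u w :
  \sum_(s <- g) s.1 * (s.2 ++ u == w)%:R =
  (drop (size w - size u) w == u)%:R * coeff g (take (size w - size u) w).
Proof.
rewrite coeffE mulr_sumr; apply: eq_bigr => s _.
by rewrite cat_eqEr natr_and mulrCA (eq_sym (take _ _)).
Qed.

Lemma coeff_mul_l f g w :
  coeff (fmul f g) w =
  \sum_(t <- f) t.1 * ((take (size t.2) w == t.2)%:R * coeff g (drop (size t.2) w)).
Proof.
rewrite coeff_mul; apply: eq_bigr => t _; rewrite -sum_coeff_prefix mulr_sumr.
by apply: eq_bigr => s _; rewrite mulrA.
Qed.

Lemma coeff_mul_r f g w :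
  coeff (fmul g f) w =
  \sum_(t <- f) t.1 * ((drop (size w - size t.2) w == t.2)%:R *
                       coeff g (take (size w - size t.2) w)).
Proof.
rewrite coeff_mul exchange_big; apply: eq_bigr => t _.
rewrite -sum_coeff_suffix mulr_sumr.
by apply: eq_bigr => s _; rewrite mulrCA mulrA.
Qed.

Lemma coeff_mulA f g h w :
  coeff (fmul (fmul f g) h) w = coeff (fmul f (fmul g h)) w.
Proof.
rewrite !coeff_mul /fmul big_allpairs_dep; apply: eq_bigr => t _.
rewrite big_allpairs_dep; apply: eq_bigr => s _; apply: eq_bigr => r _ /=.
by rewrite !mulrA catA.
Qed.

Lemma coeff_mul1 f w : coeff (fmul (fone K) f) w = coeff f w.
Proof. by rewrite coeff_mul_l big_seq1 /= take0 drop0 !mul1r. Qed.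

Lemma coeff_mul1r f w : coeff (fmul f (fone K)) w = coeff f w.
Proof.
rewrite coeff_mul coeffE; apply: eq_bigr => t _.
by rewrite big_seq1 /= cats0 mulr1.
Qed.

Definition relgen (e : K * word * nat * word) : free K :=
  fscale e.1.1.1 (fmul (fword K e.1.1.2) (fmul (rel K e.1.2) (fword K e.2))).

Lemma coeff_relgen e w :
  coeff (relgen e) w =
  e.1.1.1 * \sum_(r <- rel K e.1.2) r.1 * (e.1.1.2 ++ (r.2 ++ e.2) == w)%:R.
Proof.
rewrite /relgen coeff_scale coeff_mul big_seq1; congr (_ * _).
rewrite /fmul big_allpairs_dep; apply: eq_bigr => r _.
by rewrite big_seq1 /= !mulr1 mul1r.
Qed.

Lemma coeff_idealgen s w : coeff (idealgen s) w = \sum_(e <- s) coeff (relgen e) w.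
Proof. by rewrite /idealgen coeff_flatten big_map. Qed.

Lemma inIdeal_coeff f g : (forall w, coeff f w = coeff g w) -> inIdeal g -> inIdeal f.
Proof. by move=> fg [s Hs]; exists s => w; rewrite fg. Qed.

Lemma inIdeal0 f : (forall w, coeff f w = 0) -> inIdeal f.
Proof. by move=> f0; exists [::] => w; rewrite f0 /idealgen coeff_nil. Qed.

Lemma inIdeal_relgen e : inIdeal (relgen e).
Proof. by exists [:: e] => w; rewrite coeff_idealgen big_seq1. Qed.

Lemma inIdeal_cat f g : inIdeal f -> inIdeal g -> inIdeal (f ++ g).
Proof.
move=> [s1 H1] [s2 H2]; exists (s1 ++ s2) => w.
by rewrite coeff_cat H1 H2 !coeff_idealgen big_cat.
Qed.

Lemma inIdeal_scale k f : inIdeal f -> inIdeal (fscale k f).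
Proof.
move=> [s H]; exists [seq ((k * e.1.1.1, e.1.1.2), e.1.2, e.2) | e <- s] => w.
rewrite coeff_scale H !coeff_idealgen big_map mulr_sumr; apply: eq_bigr => e _.
by rewrite !coeff_relgen /= mulrA.
Qed.

Lemma inIdeal_monoml k u g : inIdeal g -> inIdeal [seq (k * s.1, u ++ s.2) | s <- g].
Proof.
move=> [s H]; exists [seq ((k * e.1.1.1, u ++ e.1.1.2), e.1.2, e.2) | e <- s] => w.
rewrite coeffE big_map /=.
under eq_bigr do rewrite -mulrA.
rewrite -mulr_sumr sum_coeff_prefix H !coeff_idealgen big_map !mulr_sumr.
apply: eq_bigr => e _; rewrite !coeff_relgen /= !mulr_sumr; apply: eq_bigr => r _.
rewrite -!mulrA; congr (_ * _); rewrite mulrCA; congr (_ * _); rewrite mulrCA.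
by congr (_ * _); rewrite (eq_sym _ (drop _ _)) -natr_and -cat_eqE !catA.
Qed.

Lemma inIdeal_monomr k u g : inIdeal g -> inIdeal [seq (s.1 * k, s.2 ++ u) | s <- g].
Proof.
move=> [s H]; exists [seq ((e.1.1.1 * k, e.1.1.2), e.1.2, e.2 ++ u) | e <- s] => w.
rewrite coeffE big_map /=.
under eq_bigr do rewrite [_ * k]mulrC -mulrA.
rewrite -mulr_sumr sum_coeff_suffix H !coeff_idealgen big_map !mulr_sumr.
apply: eq_bigr => e _; rewrite !coeff_relgen /= !mulr_sumr; apply: eq_bigr => r _.
rewrite [e.1.1.1 * k]mulrC -!mulrA; congr (_ * _); rewrite mulrCA; congr (_ * _).
rewrite mulrCA; congr (_ * _); rewrite -natr_and andbC (eq_sym _ (take _ _)).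
by rewrite andbC -cat_eqEr -!catA.
Qed.

Lemma inIdeal_mull f g : inIdeal g -> inIdeal (fmul f g).
Proof.
move=> Ig; elim: f => [|t f IH]; first by apply: inIdeal0 => w; apply: coeff_nil.
by rewrite /fmul allpairs_cons; apply: inIdeal_cat => //; apply: inIdeal_monoml.
Qed.

Lemma inIdeal_mulr f g : inIdeal g -> inIdeal (fmul g f).
Proof.
move=> Ig; elim: f => [|t f IH].
  by apply: inIdeal0 => w; rewrite coeff_mul_r big_nil.
apply: (@inIdeal_coeff _ ([seq (s.1 * t.1, s.2 ++ t.2) | s <- g] ++ fmul g f)).
  move=> w; rewrite coeff_cat coeff_mul_r big_cons coeff_mul_r; congr (_ + _); symmetry.
  rewrite coeffE big_map -sum_coeff_suffix mulr_sumr; apply: eq_bigr => s _ /=.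
  by rewrite mulrCA mulrA.
by apply: inIdeal_cat => //; apply: inIdeal_monomr.
Qed.

Lemma eqL_coeff f g : (forall w, coeff f w = coeff g w) -> eqL f g.
Proof. by move=> fg; apply: inIdeal0 => w; rewrite coeff_cat coeff_neg fg subrr. Qed.

Lemma eqL_refl f : eqL f f.
Proof. exact: eqL_coeff. Qed.

Lemma eqL_sym f g : eqL f g -> eqL g f.
Proof.
move=> /(inIdeal_scale (-1)); apply: inIdeal_coeff => w.
by rewrite coeff_scale !coeff_cat !coeff_neg mulN1r opprD opprK addrC.
Qed.

Lemma eqL_trans g f h : eqL f g -> eqL g h -> eqL f h.
Proof.
move=> fg gh; apply: inIdeal_coeff (inIdeal_cat fg gh) => w.
by rewrite !coeff_cat !coeff_neg addrA subrK.
Qed.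

Lemma eqL_cat f f' g g' : eqL f f' -> eqL g g' -> eqL (f ++ g) (f' ++ g').
Proof.
move=> ff' gg'; apply: inIdeal_coeff (inIdeal_cat ff' gg') => w.
by rewrite !coeff_cat !coeff_neg !coeff_cat opprD addrACA.
Qed.

Lemma eqL_mull f g g' : eqL g g' -> eqL (fmul f g) (fmul f g').
Proof.
move=> /(inIdeal_mull f); apply: inIdeal_coeff => w.
rewrite coeff_cat coeff_neg !coeff_mul_l -sumrN -big_split; apply: eq_bigr => t _ /=.
by rewrite coeff_cat coeff_neg !mulrDr !mulrN.
Qed.

Lemma eqL_mulr f g g' : eqL g g' -> eqL (fmul g f) (fmul g' f).
Proof.
move=> /(inIdeal_mulr f); apply: inIdeal_coeff => w.
rewrite coeff_cat coeff_neg !coeff_mul_r -sumrN -big_split; apply: eq_bigr => t _ /=.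
by rewrite coeff_cat coeff_neg !mulrDr !mulrN.
Qed.

Lemma eqL_mulA f g h : eqL (fmul (fmul f g) h) (fmul f (fmul g h)).
Proof. by apply: eqL_coeff => w; apply: coeff_mulA. Qed.

Lemma eqL_mul1 f : eqL (fmul (fone K) f) f.
Proof. by apply: eqL_coeff => w; apply: coeff_mul1. Qed.

Lemma eqL_mulr1 f : eqL (fmul f (fone K)) f.
Proof. by apply: eqL_coeff => w; apply: coeff_mul1r. Qed.

End FreeAlgebra.

Definition edge (c : bool) : letter := if c then Lb else La.
Definition pathw (u : seq bool) : word := map edge u.
Definition pqword (u v : seq bool) : word := pathw u ++ wstar (pathw v).

Lemma letter_edgeP x : exists c, x = edge c \/ x = lstar (edge c).
Proof. by case: x; [exists false; left|exists true; left|exists false; right|exists true; right]. Qed.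

Lemma wstar_cat (x y : word) : wstar (x ++ y) = wstar y ++ wstar x.
Proof. by rewrite /wstar map_cat rev_cat. Qed.

Lemma wstarK : involutive wstar.
Proof. by move=> x; rewrite /wstar map_rev revK -map_comp map_id_in // => -[]. Qed.

Lemma wstar_pathw_cons c v : wstar (pathw (c :: v)) = wstar (pathw v) ++ [:: lstar (edge c)].
Proof. by rewrite /wstar /= rev_cons cats1. Qed.

Lemma wstar_pqword u v : wstar (pqword u v) = pqword v u.
Proof. by rewrite /pqword wstar_cat wstarK. Qed.

Lemma wdeg_cat x y : wdeg (x ++ y) = wdeg x + wdeg y.
Proof. by rewrite /wdeg big_cat. Qed.

Lemma wdeg_rcons w x : wdeg (rcons w x) = wdeg w + ldeg x.
Proof. by rewrite -cats1 wdeg_cat /wdeg big_seq1. Qed.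

Lemma wdeg_pathw u : wdeg (pathw u) = (size u)%:Z.
Proof.
elim: u => [|c u IH]; first by rewrite /wdeg big_nil.
by rewrite /wdeg /= big_cons -/(wdeg _) IH; case: c => /=; lia.
Qed.

Lemma wdeg_wstar_pathw u : wdeg (wstar (pathw u)) = - (size u)%:Z.
Proof.
elim: u => [|c u IH]; first by rewrite /wdeg /wstar big_nil.
by rewrite wstar_pathw_cons wdeg_cat IH /wdeg big_seq1; case: c => /=; lia.
Qed.

Lemma wdeg_pqword u v : wdeg (pqword u v) = (size u)%:Z - (size v)%:Z.
Proof. by rewrite /pqword wdeg_cat wdeg_pathw wdeg_wstar_pathw. Qed.

Fixpoint bool_words (m : nat) : seq (seq bool) :=
  if m is m'.+1 then
    [seq false :: w | w <- bool_words m'] ++ [seq true :: w | w <- bool_words m']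
  else [:: [::]].

Lemma mem_map_cons (b c : bool) w (s : seq (seq bool)) :
  (c :: w \in [seq b :: x | x <- s]) = (c == b) && (w \in s).
Proof.
apply/mapP/andP => [[y ys [-> ->]]|[/eqP -> ws]]; first by rewrite eqxx.
by exists w.
Qed.

Lemma mem_bool_words m w : (w \in bool_words m) = (size w == m).
Proof.
elim: m w => [|m IH] [|c w] //=.
- by rewrite mem_cat; apply/negP => /orP[] /mapP[].
- by rewrite mem_cat !mem_map_cons IH; case: c; rewrite /= ?orbF.
Qed.

Lemma bool_words_uniq m : uniq (bool_words m).
Proof.
elim: m => [|m IH] //=; rewrite cat_uniq !map_inj_uniq ?IH //=; try by move=> x y [].
by rewrite andbT; apply/hasPn => x /mapP[y _ ->]; rewrite mem_map_cons.
Qed.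

Definition nwords m := size (bool_words m).
Definition word_at m (i : 'I_(nwords m)) : seq bool := nth [::] (bool_words m) i.
Arguments word_at : clear implicits.

Lemma size_word_at m i : size (word_at m i) = m.
Proof. by apply/eqP; rewrite -mem_bool_words mem_nth. Qed.

Lemma word_at_inj m : injective (word_at m).
Proof. by move=> i j /eqP; rewrite /word_at nth_uniq ?bool_words_uniq // => /eqP/val_inj. Qed.

Lemma word_atP m u : size u = m -> exists i, word_at m i = u.
Proof.
move=> um; have ui : (index u (bool_words m) < nwords m)%N.
  by rewrite index_mem mem_bool_words um.
by exists (Ordinal ui); rewrite /word_at nth_index // mem_bool_words um.
Qed.

Section NormalForm.
Variable K : fieldType.
Local Notation eqL := (@eqL K).

Lemma eqL_relgen (f g : free K) e :
  (forall w, coeff (f ++ fneg g) w = coeff (relgen e) w) -> eqL f g.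
Proof. by move=> fg; apply: inIdeal_coeff fg (inIdeal_relgen e). Qed.

Lemma eqL_monom (k k' : K) (x y : word) : k = k' -> x = y -> eqL [:: (k, x)] [:: (k', y)].
Proof. by move=> -> ->; apply: eqL_refl. Qed.

Lemma eqL_CK1 (c c' : bool) (k : K) w1 w2 :
  eqL [:: (k, w1 ++ [:: lstar (edge c); edge c'] ++ w2)]
      (if c == c' then [:: (k, w1 ++ w2)] else [::]).
Proof.
case: c; case: c' => /=.
- apply: (@eqL_relgen _ _ ((k, w1), 1%N, w2)) => w.
  rewrite coeff_relgen /= !big_cons big_nil !coeff_cons coeff_nil /=; ring.
- apply: (@eqL_relgen _ _ ((k, w1), 3%N, w2)) => w.
  by rewrite coeff_relgen /= !big_cons big_nil !coeff_cons coeff_nil /= mul1r !addr0.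
- apply: (@eqL_relgen _ _ ((k, w1), 2%N, w2)) => w.
  by rewrite coeff_relgen /= !big_cons big_nil !coeff_cons coeff_nil /= mul1r !addr0.
- apply: (@eqL_relgen _ _ ((k, w1), 0%N, w2)) => w.
  rewrite coeff_relgen /= !big_cons big_nil !coeff_cons coeff_nil /=; ring.
Qed.

Lemma eqL_CK2 (k : K) w1 w2 :
  eqL [:: (k, w1 ++ [:: La; Las] ++ w2); (k, w1 ++ [:: Lb; Lbs] ++ w2)]
      [:: (k, w1 ++ w2)].
Proof.
apply: (@eqL_relgen _ _ ((k, w1), 4%N, w2)) => w.
rewrite coeff_relgen /= !big_cons big_nil !coeff_cons coeff_nil /=; ring.
Qed.

Definition pq_form (L : seq (K * seq bool * seq bool)) : free K :=
  [seq (t.1.1, pqword t.1.2 t.2) | t <- L].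

Lemma pqword_mul_letter k u v x : exists L : seq (seq bool * seq bool),
  all (fun p => (size p.1)%:Z - (size p.2)%:Z == (size u)%:Z - (size v)%:Z + ldeg x) L /\
  eqL [:: (k, pqword u v ++ [:: x])] [seq (k, pqword p.1 p.2) | p <- L].
Proof.
have [c [->|->]] := letter_edgeP x.
- case: v => [|c' v].
    exists [:: (rcons u c, [::])]; split.
      by rewrite /= andbT size_rcons; case: c => /=; apply/eqP; lia.
    by apply: eqL_monom => //; rewrite /pqword /pathw /wstar /= !cats0 map_rcons cats1.
  exists (if c' == c then [:: (u, v)] else [::]); split.
    by case: (c' == c) => //=; rewrite andbT; case: c => /=; apply/eqP; lia.
  have -> : pqword u (c' :: v) ++ [:: edge c] =
            (pathw u ++ wstar (pathw v)) ++ [:: lstar (edge c'); edge c] ++ [::].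
    by rewrite /pqword wstar_pathw_cons -!catA.
  apply: eqL_trans (eqL_CK1 _ _ _ _ _) _.
  by case: (c' == c); rewrite ?cats0; apply: eqL_refl.
- exists [:: (u, c :: v)]; split.
    by rewrite /= andbT; case: c => /=; apply/eqP; lia.
  by apply: eqL_monom => //; rewrite /pqword wstar_pathw_cons catA.
Qed.

Lemma monom_pq_form k w : exists L : seq (seq bool * seq bool),
  all (fun p => (size p.1)%:Z - (size p.2)%:Z == wdeg w) L /\
  eqL [:: (k, w)] [seq (k, pqword p.1 p.2) | p <- L].
Proof.
elim/last_ind: w => [|w x [L [degL wL]]].
  by exists [:: ([::], [::])]; split; [rewrite /= /wdeg big_nil | apply: eqL_refl].
have mulx : fmul [seq (k, pqword p.1 p.2) | p <- L] (fword K [:: x]) =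
            [seq (k, pqword p.1 p.2 ++ [:: x]) | p <- L].
  by elim: (L) => //= p L' IH; rewrite /fmul allpairs_cons /= mulr1 -IH.
have wxL : eqL [:: (k, rcons w x)] [seq (k, pqword p.1 p.2 ++ [:: x]) | p <- L].
  rewrite -mulx; apply: eqL_trans (eqL_mulr _ wL).
  by apply: eqL_monom; rewrite ?mulr1 ?cats1.
suff [L' [degL' xL']] : exists L' : seq (seq bool * seq bool),
    all (fun p => (size p.1)%:Z - (size p.2)%:Z == wdeg (rcons w x)) L' /\
    eqL [seq (k, pqword p.1 p.2 ++ [:: x]) | p <- L] [seq (k, pqword p.1 p.2) | p <- L'].
  by exists L'; split => //; apply: eqL_trans wxL xL'.
elim: L degL {wL wxL mulx} => [|[u v] L IH] /=; first by exists [::]; split => //; apply: eqL_refl.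
case/andP => /eqP deguv /IH [L1 [deg1 eq1]].
have [L0 [deg0 eq0]] := pqword_mul_letter k u v x.
exists (L0 ++ L1); split.
  rewrite all_cat deg1 andbT; apply/allP => p /(allP deg0) /eqP ->.
  by rewrite wdeg_rcons deguv.
by rewrite map_cat; apply: (@eqL_cat _ [:: _]).
Qed.

Lemma homog_pq_form (g : free K) n : all (fun t => wdeg t.2 == n) g ->
  exists L, all (fun t => (size t.1.2)%:Z - (size t.2)%:Z == n) L /\ eqL g (pq_form L).
Proof.
elim: g => [|[k w] g IH] /=; first by exists [::]; split => //; apply: eqL_refl.
case/andP => /eqP degw /IH [L1 [deg1 eq1]].
have [L0 [deg0 eq0]] := monom_pq_form k w.
exists ([seq (k, p.1, p.2) | p <- L0] ++ L1); split.
  by rewrite all_cat deg1 andbT all_map; apply/allP => p /(allP deg0) /=; rewrite degw.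
by rewrite /pq_form map_cat -map_comp; apply: (@eqL_cat _ [:: (k, w)]).
Qed.

(* Repeated use of aa* + bb* = 1 inserted between p and q^*. *)
Lemma pq_form_pad k u v m :
  eqL (pq_form [:: (k, u, v)]) (pq_form [seq (k, u ++ w, v ++ w) | w <- bool_words m]).
Proof.
elim: m u v => [|m IH] u v /=; first by rewrite !cats0; apply: eqL_refl.
have ext c : pqword (u ++ [:: c]) (v ++ [:: c]) =
             pathw u ++ [:: edge c; lstar (edge c)] ++ wstar (pathw v).
  by rewrite /pqword /pathw !map_cat wstar_cat -catA.
apply: eqL_trans (eqL_sym (eqL_CK2 k (pathw u) (wstar (pathw v)))) _.
rewrite -(ext false) -(ext true) /pq_form /= !map_cat -!map_comp.
have shift c : eqL [:: (k, pqword (u ++ [:: c]) (v ++ [:: c]))]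
  [seq (k, pqword (u ++ c :: x) (v ++ c :: x)) | x <- bool_words m].
  apply: eqL_trans (IH _ _) _; rewrite /pq_form -!map_comp; apply: eqL_coeff => w'.
  by congr (coeff _ _); apply: eq_map => x /=; rewrite -!catA.
exact: (eqL_cat (shift false) (shift true)).
Qed.

(* [mx_elt R C X] is sum_(i,j) X_ij p_i q_j^*, p_i and q_j ranging over the
   paths of lengths R and C; these p_i q_j^* are matrix units, so [mx_elt]
   embeds 'M_(2^R, 2^C) into L_K(E) compatibly with products and stars. *)
Definition mx_elt R C (X : 'M[K]_(nwords R, nwords C)) : free K :=
  [seq (X p.1 p.2, pqword (word_at R p.1) (word_at C p.2))
  | p <- [seq (i, j) | i <- enum 'I_(nwords R), j <- enum 'I_(nwords C)]].
Arguments mx_elt : clear implicits.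

Lemma sum_enum n (F : 'I_n -> K) : \sum_(i <- enum 'I_n) F i = \sum_i F i.
Proof. by rewrite big_enum. Qed.

Lemma coeff_mx_elt R C X w :
  coeff (mx_elt R C X) w =
  \sum_i \sum_j X i j * (pqword (word_at R i) (word_at C j) == w)%:R.
Proof.
rewrite coeffE big_map big_allpairs sum_enum; apply: eq_bigr => i _.
by rewrite sum_enum.
Qed.

Lemma mx_eltD R C X Y : eqL (mx_elt R C X ++ mx_elt R C Y) (mx_elt R C (X + Y)).
Proof.
apply: eqL_coeff => w; rewrite coeff_cat !coeff_mx_elt -big_split.
by apply: eq_bigr => i _; rewrite -big_split; apply: eq_bigr => j _; rewrite mxE mulrDl.
Qed.

Lemma mx_elt0 R C : eqL [::] (mx_elt R C 0).
Proof.
apply: eqL_coeff => w; rewrite coeff_nil coeff_mx_elt big1 // => i _.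
by rewrite big1 // => j _; rewrite mxE mul0r.
Qed.

Lemma sum_delta n (i : 'I_n) (G : 'I_n -> K) : \sum_i' (i' == i)%:R * G i' = G i.
Proof.
rewrite (bigD1 i) //= eqxx mul1r big1 ?addr0 // => i' /negbTE ->.
by rewrite mul0r.
Qed.

Lemma monom_mx_elt R C k u v : size u = R -> size v = C ->
  exists X, eqL [:: (k, pqword u v)] (mx_elt R C X).
Proof.
move=> uR vC; have [i <-] := word_atP uR; have [j <-] := word_atP vC.
exists (k *: delta_mx i j); apply: eqL_coeff => w.
rewrite coeff_cons coeff_nil addr0 coeff_mx_elt.
have swap (a b c d : K) : a * (b * c) * d = b * (c * (a * d)).
  by rewrite -mulrA mulrCA mulrA (mulrC b) -!mulrA mulrCA.
under eq_bigr do under eq_bigr do rewrite !mxE natr_and swap.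
by under eq_bigr do rewrite -mulr_sumr sum_delta; rewrite sum_delta.
Qed.

Lemma pq_form_mx_elt R C (L : seq (K * seq bool * seq bool)) :
  all (fun t => (size t.1.2 == R) && (size t.2 == C)) L ->
  exists X, eqL (pq_form L) (mx_elt R C X).
Proof.
elim: L => [|[[k u] v] L IH] /=; first by exists 0; apply: mx_elt0.
case/andP => /andP[/eqP uR /eqP vC] /IH[X LX].
have [Y uvY] := monom_mx_elt k uR vC.
by exists (Y + X); apply: eqL_trans (mx_eltD _ _); apply: (@eqL_cat _ [:: _]).
Qed.

Lemma eqL_cancel_paths v v' k w1 w2 : size v = size v' ->
  eqL [:: (k, w1 ++ wstar (pathw v) ++ pathw v' ++ w2)]
      (if v == v' then [:: (k, w1 ++ w2)] else [::]).
Proof.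
elim: v v' w1 w2 => [|c v IH] [|c' v'] w1 w2 //= => [_|[size_vv']].
  exact: eqL_refl.
have -> : w1 ++ wstar (pathw (c :: v)) ++ pathw (c' :: v') ++ w2 =
          (w1 ++ wstar (pathw v)) ++ [:: lstar (edge c); edge c'] ++ (pathw v' ++ w2).
  by rewrite wstar_pathw_cons /= -!catA.
apply: eqL_trans (eqL_CK1 _ _ _ _ _) _.
rewrite eqseq_cons; case: (c == c') => /=; last exact: eqL_refl.
by rewrite -catA; apply: IH.
Qed.

Lemma fmul_map (T1 T2 : Type) (P : seq T1) (Q : seq T2) (F : T1 -> K * word)
    (G : T2 -> K * word) (H : T1 -> T2 -> free K) :
  (forall p q, eqL [:: ((F p).1 * (G q).1, (F p).2 ++ (G q).2)] (H p q)) ->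
  eqL (fmul (map F P) (map G Q)) (flatten [seq flatten [seq H p q | q <- Q] | p <- P]).
Proof.
move=> FGH; elim: P => [|p P IH] /=; first exact: eqL_refl.
rewrite /fmul allpairs_cons; apply: eqL_cat => //.
elim: Q {IH} => [|q Q IHQ] /=; first exact: eqL_refl.
exact: (@eqL_cat _ [:: _]).
Qed.

Lemma mx_eltM R1 C R2 (X : 'M[K]_(nwords R1, nwords C)) (Y : 'M[K]_(nwords C, nwords R2)) :
  eqL (fmul (mx_elt R1 C X) (mx_elt C R2 Y)) (mx_elt R1 R2 (X *m Y)).
Proof.
pose H (p : 'I_(nwords R1) * 'I_(nwords C)) (q : 'I_(nwords C) * 'I_(nwords R2)) :=
  if p.2 == q.1 then [:: (X p.1 p.2 * Y q.1 q.2, pqword (word_at R1 p.1) (word_at R2 q.2))]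
  else [::].
apply: eqL_trans (@fmul_map _ _ _ _ _ _ H _) _.
  move=> p q /=; rewrite /H -(inj_eq (@word_at_inj C)).
  rewrite /pqword -!catA; apply: eqL_cancel_paths.
  by rewrite !size_word_at.
apply: eqL_coeff => w.
rewrite coeff_flatten big_map coeff_mx_elt big_allpairs sum_enum; apply: eq_bigr => i _.
rewrite sum_enum.
under eq_bigr do rewrite coeff_flatten big_map big_allpairs sum_enum.
have Hdelta j j' l : coeff (H (i, j) (j', l)) w =
    (j' == j)%:R * (X i j * Y j' l * (pqword (word_at R1 i) (word_at R2 l) == w)%:R).
  rewrite /H /= eq_sym; case: eqP => _; last by rewrite coeff_nil mul0r.
  by rewrite coeff_cons coeff_nil addr0 mul1r.
under eq_bigr do under eq_bigr do rewrite sum_enum.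
under eq_bigr do under eq_bigr do under eq_bigr do rewrite Hdelta.
under eq_bigr do under eq_bigr do rewrite -mulr_sumr.
under eq_bigr do rewrite sum_delta.
by rewrite exchange_big; apply: eq_bigr => l _; rewrite mxE mulr_suml.
Qed.

Lemma mx_elt_star (conj : {rmorphism K -> K}) R C (X : 'M[K]_(nwords R, nwords C)) :
  eqL (fstar conj (mx_elt R C X)) (mx_elt C R (mxstar conj X)).
Proof.
apply: eqL_coeff => w.
rewrite coeff_mx_elt coeffE /fstar /mx_elt -map_comp big_map big_allpairs sum_enum.
under eq_bigr do rewrite sum_enum.
rewrite exchange_big /=; apply: eq_bigr => j _; apply: eq_bigr => i _.
by rewrite wstar_pqword !mxE.
Qed.

Lemma homog_mx_elt R (P : 'M[K]_(nwords R, nwords R)) : homog (mx_elt R R P).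
Proof.
exists 0, (mx_elt R R P); split; first exact: eqL_refl.
by apply/allP => t /mapP[p _ ->] /=; rewrite wdeg_pqword !size_word_at subrr.
Qed.

Lemma pq_form_pad_seq (L : seq (K * seq bool * seq bool)) (m : K * seq bool * seq bool -> nat) :
  eqL (pq_form L)
      (pq_form (flatten [seq [seq (t.1.1, t.1.2 ++ w, t.2 ++ w) | w <- bool_words (m t)]
                        | t <- L])).
Proof.
elim: L => [|[[k u] v] L IH] /=; first exact: eqL_refl.
by rewrite /pq_form map_cat; apply: (@eqL_cat _ [:: _]) => //; apply: pq_form_pad.
Qed.

(* Padding every monomial p q^* of degree n to |q| = C, with C at least every
   |q| and |n|, puts all of them in the same block 'M_(2^(C+n), 2^C). *)
Lemma homog_mx_eltP (x : free K) : homog x ->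
  exists R C (X : 'M[K]_(nwords R, nwords C)), eqL x (mx_elt R C X).
Proof.
move=> [n [g [xg degg]]].
have [L [degL gL]] := homog_pq_form degg.
set C := (\max_(t <- L) size t.2 + `|n|)%N.
set R := absz (C%:Z + n).
pose m (t : K * seq bool * seq bool) := (C - size t.2)%N.
have [X padX] : exists X, eqL (pq_form (flatten
    [seq [seq (t.1.1, t.1.2 ++ w, t.2 ++ w) | w <- bool_words (m t)] | t <- L]))
    (mx_elt R C X).
  apply: pq_form_mx_elt; apply/allP => _ /flattenP[_ /mapP[t tL ->]] /mapP[w + ->] /=.
  rewrite mem_bool_words => /eqP sizew.
  have le_t : (size t.2 <= \max_(t <- L) size t.2)%N by apply: leq_bigmax_seq.
  have /eqP degt := allP degL t tL.
  rewrite !size_cat sizew /m /R /C.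
  move: le_t degt; move: (\max_(t <- L) size t.2) (size t.1.2) (size t.2) => M a b.
  by move=> *; apply/andP; split; apply/eqP; lia.
exists R, C, X.
by apply: eqL_trans xg (eqL_trans gL (eqL_trans (pq_form_pad_seq L m) padX)).
Qed.

Lemma star_regular (conj : {rmorphism K -> K}) :
  involutive conj -> positive_definite conj -> graded_star_regular conj.
Proof.
move=> conjK conj_pd x /homog_mx_eltP[R [C [X xX]]].
have [P [Z [PP stP PXZ XPX]]] := mx_projection_exists conjK conj_pd X.
exists (mx_elt R R P); split; first exact: homog_mx_elt.
split; first split.
- by have := mx_eltM P P; rewrite PP.
- by have := mx_elt_star conj P; rewrite stP.
split => y.
- exists (fmul (mx_elt R C X) y).
  have XPX' := eqL_sym (mx_eltM P X); rewrite -XPX in XPX'.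
  apply: eqL_trans (eqL_mulr y xX) _.
  by apply: eqL_trans (eqL_mulr y XPX') (eqL_mulA _ _ _).
- exists (fmul (mx_elt C R Z) y).
  have PXZ' := eqL_sym (mx_eltM X Z); rewrite -PXZ in PXZ'.
  apply: eqL_trans (eqL_mulr y PXZ') _.
  by apply: eqL_trans (eqL_mulA _ _ _) (eqL_mulr _ (eqL_sym xX)).
Qed.

End NormalForm.

Section DirectFiniteness.
Variable K : fieldType.
Local Notation eqL := (@eqL K).

Lemma homog_fword w : homog (fword K w).
Proof. by exists (wdeg w), (fword K w); split; [apply: eqL_refl | rewrite /= eqxx]. Qed.

(* If x y = 1 and x u x = x with u invertible, then x u = 1, so x = u^-1 and
   y = u x y = u. *)
Lemma unit_regular_directly_finite : graded_unit_regular K -> graded_directly_finite K.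
Proof.
move=> ur x y hx _ xy1; have [u [_ [[z [uz1 zu1]] xux]]] := ur x hx.
have xu1 : eqL (fmul x u) (fone K).
  apply: eqL_trans (eqL_sym (eqL_mulr1 _)) _.
  apply: eqL_trans (eqL_mull _ (eqL_sym xy1)) _.
  apply: eqL_trans (eqL_sym (eqL_mulA _ _ _)) _.
  exact: eqL_trans (eqL_mulr _ xux) xy1.
have xz : eqL x z.
  apply: eqL_trans (eqL_sym (eqL_mulr1 _)) _.
  apply: eqL_trans (eqL_mull _ (eqL_sym uz1)) _.
  apply: eqL_trans (eqL_sym (eqL_mulA _ _ _)) _.
  exact: eqL_trans (eqL_mulr _ xu1) (eqL_mul1 _).
have ux1 : eqL (fmul u x) (fone K) by apply: eqL_trans (eqL_mull _ xz) uz1.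
have yu : eqL y u.
  apply: eqL_trans (eqL_sym (eqL_mul1 _)) _.
  apply: eqL_trans (eqL_mulr _ (eqL_sym ux1)) _.
  apply: eqL_trans (eqL_mulA _ _ _) _.
  exact: eqL_trans (eqL_mull _ xy1) (eqL_mulr1 _).
exact: eqL_trans (eqL_mulr _ yu) ux1.
Qed.

(* L_K(E) acts on K^N through a : e_n |-> e_(2n) and b : e_n |-> e_(2n+1),
   written here on coordinate functions g : nat -> K. *)
Definition letter_op (l : letter) (g : nat -> K) : nat -> K :=
  match l with
  | La => fun m => if odd m then 0 else g m./2
  | Lb => fun m => if odd m then g m./2 else 0
  | Las => fun n => g n.*2
  | Lbs => fun n => g n.*2.+1
  end.

Definition word_op (w : word) (g : nat -> K) : nat -> K := foldr letter_op g w.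

Definition rep (f : free K) (g : nat -> K) : nat -> K :=
  fun n => \sum_(t <- f) t.1 * word_op t.2 g n.

Lemma letter_op_sum (I : Type) (s : seq I) (a : I -> K) (G : I -> nat -> K) l :
  letter_op l (fun m => \sum_(i <- s) a i * G i m) =
  fun m => \sum_(i <- s) a i * letter_op l (G i) m.
Proof.
apply: functional_extensionality => m; case: l => //=; case: (odd m) => //.
all: by rewrite big1 // => i _; rewrite mulr0.
Qed.

Lemma word_op_sum (I : Type) (s : seq I) (a : I -> K) (G : I -> nat -> K) w :
  word_op w (fun m => \sum_(i <- s) a i * G i m) =
  fun m => \sum_(i <- s) a i * word_op w (G i) m.
Proof. by elim: w => [|l w IH] //=; rewrite IH letter_op_sum. Qed.

Lemma word_op_cat u v g : word_op (u ++ v) g = word_op u (word_op v g).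
Proof. exact: foldr_cat. Qed.

Lemma word_op0 w : word_op w (fun _ => 0) = fun _ => 0.
Proof.
elim: w => [|l w IH] //=; rewrite IH.
by apply: functional_extensionality => m; case: l => //=; case: odd.
Qed.

Lemma rep_mul f h g n : rep (fmul f h) g n = rep f (rep h g) n.
Proof.
rewrite /rep /fmul big_allpairs_dep; apply: eq_bigr => t _.
rewrite word_op_sum mulr_sumr; apply: eq_bigr => s _ /=.
by rewrite word_op_cat mulrA.
Qed.

Lemma rep_cat f h g n : rep (f ++ h) g n = rep f g n + rep h g n.
Proof. by rewrite /rep big_cat. Qed.

Lemma rep_scale k f g n : rep (fscale k f) g n = k * rep f g n.
Proof. by rewrite /rep /fscale big_map mulr_sumr; apply: eq_bigr => t _; rewrite mulrA. Qed.

Lemma rep_coeffE f (W : seq word) g n : uniq W -> {subset map snd f <= W} ->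
  rep f g n = \sum_(w <- W) coeff f w * word_op w g n.
Proof.
move=> uW fW; under [RHS]eq_bigr do rewrite coeffE mulr_suml.
rewrite exchange_big; apply: eq_big_seq => t ft.
have tW : t.2 \in W by apply/fW/map_f.
rewrite (big_rem _ tW) /= eqxx mulr1 big1_seq ?addr0 // => w /andP[_].
rewrite mem_rem_uniq // => /andP[/= wt _].
by rewrite eq_sym (negbTE wt) mulr0 mul0r.
Qed.

Lemma rep_coeff f f' g n : (forall w, coeff f w = coeff f' w) -> rep f g n = rep f' g n.
Proof.
move=> ff'; pose W := undup (map snd (f ++ f')).
rewrite (@rep_coeffE f W) ?(@rep_coeffE f' W) ?undup_uniq //.
- by apply: eq_bigr => w _; rewrite ff'.
- by move=> w wf'; rewrite mem_undup map_cat mem_cat wf' orbT.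
- by move=> w wf; rewrite mem_undup map_cat mem_cat wf.
Qed.

Lemma rep_rel i g n : rep (rel K i) g n = 0.
Proof.
have half_double m : (m.*2)./2 = m by rewrite -[RHS](half_bit_double m false).
rewrite /rep; case: i => [|[|[|[|i]]]] /=; rewrite !big_cons big_nil /=.
- by rewrite odd_double half_double !mulr1 !mul1r addr0 mulN1r subrr.
- by rewrite odd_double uphalf_double !mulr1 !mul1r addr0 mulN1r subrr.
- by rewrite odd_double mulr0 addr0.
- by rewrite odd_double mulr0 addr0.
- rewrite !mul1r !mulr1 addr0 mulN1r.
  by case: (odd n) (odd_double_half n) => nE; rewrite -{2}nE ?add1n ?add0n add0r subrr.
Qed.

Lemma rep_idealgen s g n : rep (idealgen s) g n = 0.
Proof.
elim: s => [|e s IH] /=; first by rewrite /rep big_nil.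
rewrite rep_cat IH addr0 rep_scale rep_mul.
have -> : rep (fmul (rel K e.1.2) (fword K e.2)) g = fun _ => 0.
  by apply: functional_extensionality => m; rewrite rep_mul rep_rel.
by rewrite /rep big_seq1 word_op0 !mulr0.
Qed.

Lemma rep_eqL f f' g n : eqL f f' -> rep f g n = rep f' g n.
Proof.
move=> [s fs]; have /eqP := rep_coeff g n fs.
by rewrite rep_idealgen rep_cat rep_scale mulN1r subr_eq0 => /eqP.
Qed.

Lemma a_astar_neq1 : ~ eqL (fmul (fword K [:: La]) (fword K [:: Las])) (fone K).
Proof.
move=> /(rep_eqL (fun m => (m == 1)%:R) 1).
by rewrite rep_mul /rep !big_seq1 /= mulr0 mul1r => /eqP; rewrite eq_sym oner_eq0.
Qed.

Lemma not_graded_directly_finite : ~ graded_directly_finite K.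
Proof.
move=> df; apply: a_astar_neq1; apply: df; try exact: homog_fword.
apply: eqL_trans (eqL_CK1 false false 1 [::] [::]).
by apply: eqL_monom; rewrite ?mulr1.
Qed.

End DirectFiniteness.

Theorem mainTheorem16 (K : fieldType) (conj : {rmorphism K -> K})
  (conj_invol : involutive conj)
  (Kpd : positive_definite conj) :
  graded_star_regular conj /\ ~ graded_unit_regular K /\ ~ graded_directly_finite K.
Proof.
split; first exact: star_regular.
split; last exact: not_graded_directly_finite.
by move/unit_regular_directly_finite; apply: not_graded_directly_finite.
Qed.
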